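(* Assume $e_{-1}+e_{+1}<1$ and $\delta_{\tilde p}\neq 0$, and let $$\alpha=1-(1-e_{-1}-e_{+1})\cdot\frac{\delta_p}{\delta_{\tilde p}}.$$ Let $\mathcal F$ be a class of measurable classifiers $f:\mathcal X\to\{-1,+1\}$ and let $\tilde f^*\in\arg\min_{f\in\mathcal F}\mathbb E_{\tilde{\mathcal D}}[\mathbb 1_{\alpha\text{-peer}}(f(X),\tilde Y)]$. Then $\tilde f^*\in\arg\min_{f\in\mathcal F}R_{\mathcal D}(f)$, where $R_{\mathcal D}(f)=\mathbb P_{(X,Y)\sim\mathcal D}(f(X)\neq Y)$.
   Context: Let $\mathcal X\subseteq\mathbb R^d$ and let $(X,Y)$ be a random pair with distribution $\mathcal D$ on $\mathcal X\times\{-1,+1\}$, with $p:=\mathbb P(Y=+1)\in(0,1)$. A noisy label $\tilde Y\in\{-1,+1\}$ is generated with noise rates $e_{+1}:=\mathbb P(\tilde Y=-1\mid Y=+1)$, $e_{-1}:=\mathbb P(\tilde Y=+1\mid Y=-1)$, where $\tilde Y$ is conditionally independent of $X$ given $Y$; $\tilde{\mathcal D}$ is the distribution of $(X,\tilde Y)$. Let $\delta_p:=\mathbb P(Y=+1)-\mathbb P(Y=-1)$ and $\delta_{\tilde p}:=\mathbb P(\tilde Y=+1)-\mathbb P(\tilde Y=-1)$. The 0-1 loss is $\mathbb 1(a,b)=1$ if $a\neq b$ and $0$ otherwise. For a weight $\alpha$, the expected $\alpha$-weighted 0-1 peer loss is $$\mathbb E_{\tilde{\mathcal D}}[\mathbb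 1_{\alpha\text{-peer}}(f(X),\tilde Y)]:=\mathbb E[\mathbb 1(f(X),\tilde Y)]-\alpha\,\mathbb E[\mathbb 1(f(X_1),\tilde Y_2)],$$ where $(X,\tilde Y),(X_1,\tilde Y_1),(X_2,\tilde Y_2)$ are i.i.d. draws from $\tilde{\mathcal D}$. *)

From HB Require Import structures.
From mathcomp Require Import all_boot all_order all_algebra.
From mathcomp Require Import all_classical all_reals all_analysis.
Set Implicit Arguments. Unset Strict Implicit. Unset Printing Implicit Defensive.
Import Order.TTheory GRing.Theory Num.Theory.
Local Open Scope classical_set_scope.
Local Open Scope ring_scope.

(* Labels {-1,+1} are encoded as bool: true = +1, false = -1.
   0-1 loss: 1(a,b) = 1 iff a <> b. *)

Section Defs.
Context {dO dX : measure_display} {Omega : measurableType dO}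
  {T : measurableType dX} {R : realType}.
Variables (P : probability Omega R) (X : Omega -> T) (Y Yt : Omega -> bool).

Definition prb (A : set Omega) : R := fine (P A).

Definition p_pos : R := prb [set w | Y w = true].

Definition e_pos : R :=
  prb [set w | Yt w = false /\ Y w = true] / prb [set w | Y w = true].
Definition e_neg : R :=
  prb [set w | Yt w = true /\ Y w = false] / prb [set w | Y w = false].

Definition delta_p : R :=
  prb [set w | Y w = true] - prb [set w | Y w = false].
Definition delta_pt : R :=
  prb [set w | Yt w = true] - prb [set w | Yt w = false].

Definition cond_indep : Prop :=
  forall (A : set T) (y b : bool), measurable A ->
    prb [set w | X w \in A /\ Y w = y /\ Yt w = b] * prb [set w | Y w = y]
    = prb [set w | X w \in A /\ Y w = y] * prb [set w | Y w = y /\ Yt w = b].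

Definition Dnoisy : set (T * bool)%type -> \bar R :=
  pushforward P (fun w => (X w, Yt w)).

Definition risk (f : T -> bool) : R := prb [set w | f (X w) != Y w].

Definition noisy_loss (f : T -> bool) : R :=
  fine (Dnoisy [set z | f z.1 != z.2]).

(* E[1(f(X1), Yt2)] with (X1,Yt1),(X2,Yt2) i.i.d. from D~ : the pair
   ((X1,Yt1),(X2,Yt2)) has law D~ (x) D~ *)
Definition peer_term (f : T -> bool) : R :=
  fine ((Dnoisy \x Dnoisy)%E [set z | f z.1.1 != z.2.2]).

Definition peer_loss (alpha : R) (f : T -> bool) : R :=
  noisy_loss f - alpha * peer_term f.

End Defs.

From HB Require Import structures.
From mathcomp Require Import all_boot all_order all_algebra.
From mathcomp Require Import all_classical all_reals all_analysis.
From mathcomp Require Import ring lra.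
Import Order.TTheory GRing.Theory Num.Theory.
Local Open Scope classical_set_scope.
Local Open Scope ring_scope.

(* Let q_y = P(Y = y), E_y = P(Y = y, f(X) <> y), e_y = P(Y~ <> y | Y = y);
   one has R_D(f) = E_+1 + E_-1 and P(f(X) = +1) = q_+1 - E_+1 + E_-1.  As Y~ is
   conditionally independent of f(X) given Y,
     P(f(X) <> Y~, Y = y) = e_y q_y + (1 - 2 e_y) E_y,
   so E[1(f(X), Y~)] = (1 - e_-1 - e_+1) R_D(f) + e_-1
                       + (e_+1 - e_-1) P(f(X) = +1).
   The peer term, taken over two independent draws, is
   P(Y~ = +1) - delta_p~ P(f(X) = +1).  The weight alpha is exactly the one with
   alpha delta_p~ = e_-1 - e_+1, so the terms in P(f(X) = +1) cancel and the
   alpha-peer loss is (1 - e_-1 - e_+1) R_D(f) plus a constant independent of f: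
   an increasing affine function of the clean risk. *)

Lemma measurable_eq {d} {Omega : measurableType d} {h : Omega -> bool} b :
  measurable_fun setT h -> measurable [set w | h w = b].
Proof. by move=> mh; have := mh measurableT [set b] I; rewrite setTI. Qed.

Lemma measurable_neq {d} {Omega : measurableType d} {g h : Omega -> bool} :
  measurable_fun setT g -> measurable_fun setT h ->
  measurable [set w | g w != h w].
Proof.
move=> mg mh; rewrite (_ : [set w | _] =
  [set w | g w = true /\ h w = false] `|` [set w | g w = false /\ h w = true]).
  by apply: measurableU; apply: measurableI; exact: measurable_eq.
apply/funext => w /=; apply/propext.
by case: (g w) (h w) => -[] /=; intuition congruence.
Qed.

Section events.
Context {d : measure_display} {Omega : measurableType d} {R : realType}.
Variable P : probability Omega R.

Lemma prbE (A : set Omega) : measurable A -> P A = (prb P A)%:E.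
Proof. by move=> mA; rewrite /prb fineK // fin_num_measure. Qed.

Lemma prb_ext {A B : set Omega} :
  (forall w, A w <-> B w) -> prb P A = prb P B.
Proof. by move=> AB; congr prb; apply/seteqP; split => w /AB. Qed.

Lemma prb_partition {A B C : set Omega} : measurable B -> measurable C ->
  (forall w, A w <-> B w \/ C w) -> (forall w, B w -> C w -> False) ->
  prb P A = prb P B + prb P C.
Proof.
move=> mB mC ABC BC; rewrite (prb_ext (B := B `|` C) ABC) /prb.
rewrite measureU ?fineD ?fin_num_measure //.
by apply/seteqP; split => // w [] /BC.
Qed.

Lemma prb_split_bool {A : set Omega} {h : Omega -> bool} b :
  measurable A -> measurable_fun setT h ->
  prb P A = prb P [set w | A w /\ h w = b] + prb P [set w | A w /\ h w = ~~ b].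
Proof.
move=> mA mh; apply: prb_partition => [||w|w].
- by apply: measurableI => //; exact: measurable_eq.
- by apply: measurableI => //; exact: measurable_eq.
- by rewrite /=; case: b (h w) => -[] /=; intuition congruence.
- by rewrite /=; case: b (h w) => -[] /=; intuition congruence.
Qed.

Lemma prb_negb {h : Omega -> bool} b : measurable_fun setT h ->
  prb P [set w | h w = ~~ b] = 1 - prb P [set w | h w = b].
Proof.
move=> mh; have : prb P setT = 1 by rewrite /prb probability_setT.
rewrite (prb_partition (B := [set w | h w = b]) (C := [set w | h w = ~~ b])).
- by move=> <-; ring.
- exact: measurable_eq.
- exact: measurable_eq.
- by move=> w /=; case: b (h w) => -[]; intuition congruence.
- by move=> w /= ->; case: b.
Qed.

End events.

Section noisy_law.
Context {dO dX : measure_display} {Omega : measurableType dO}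
  {T : measurableType dX} {R : realType} (P : probability Omega R)
  {X : Omega -> T} {Yt : Omega -> bool}.
Hypotheses (mX : measurable_fun setT X) (mYt : measurable_fun setT Yt).

Let XYt : {mfun Omega >-> (T * bool)%type} :=
  mfun_Sub (mem_set (measurable_fun_pair mX mYt)).

HB.instance Definition _ :=
  Probability.copy (Dnoisy P X Yt) (distribution P XYt).

Lemma peer_termE (f : T -> bool) : measurable_fun setT f ->
  peer_term P X Yt f =
    prb P [set w | f (X w) = true] * prb P [set w | Yt w = false]
  + prb P [set w | f (X w) = false] * prb P [set w | Yt w = true].
Proof.
move=> mf; have mfX := measurableT_comp mf mX.
pose rect (a b : bool) :=
  (f @^-1` [set a] `*` [set: bool]) `*` ([set: T] `*` [set b]).
have mrect a b : measurable (rect a b).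
  by apply: measurableX; apply: measurableX => //; exact: measurable_eq.
have rectE a b : ((Dnoisy P X Yt \x Dnoisy P X Yt) (rect a b) =
    (prb P [set w | f (X w) = a] * prb P [set w | Yt w = b])%:E)%E.
  rewrite product_measure1E; first last.
  - exact: measurableX.
  - by apply: measurableX => //; exact: measurable_eq.
  rewrite EFinM -!prbE; [|exact: measurable_eq..].
  by congr (P _ * P _)%E; apply/seteqP; split=> w //= [].
have rect_cover :
    [set z | f z.1.1 != z.2.2] = rect true false `|` rect false true.
  apply/seteqP; split => -[[x1 y1] [x2 y2]]; rewrite /rect /preimage /=.
    by case: (f x1); case: y2 => // _; [left|right].
  by case=> -[[-> _] [_ ->]].
have rect_disj : rect true false `&` rect false true = set0.
  apply/seteqP; split => // -[[x1 y1] [x2 y2]].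
  by rewrite /rect /preimage /= => -[[[-> _] _] [[]]].
rewrite /peer_term (_ : ((Dnoisy P X Yt \x Dnoisy P X Yt) _ =
    (Dnoisy P X Yt \x Dnoisy P X Yt) (rect true false) +
    (Dnoisy P X Yt \x Dnoisy P X Yt) (rect false true))%E).
  by rewrite !rectE.
by rewrite rect_cover measureU.
Qed.

End noisy_law.

Section class_conditional.
Context {dO dX : measure_display} {Omega : measurableType dO}
  {T : measurableType dX} {R : realType} (P : probability Omega R)
  (X : Omega -> T) (Y Yt : Omega -> bool).
Hypotheses (mX : measurable_fun setT X) (mY : measurable_fun setT Y)
  (mYt : measurable_fun setT Yt) (hci : cond_indep P X Y Yt)
  (hY : forall y, prb P [set w | Y w = y] != 0).

Definition noise_rate (y b : bool) : R :=
  prb P [set w | Y w = y /\ Yt w = b] / prb P [set w | Y w = y].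

Lemma e_posE : e_pos P Y Yt = noise_rate true false.
Proof. by congr (_ / _); apply: prb_ext => w /=; tauto. Qed.

Lemma e_negE : e_neg P Y Yt = noise_rate false true.
Proof. by congr (_ / _); apply: prb_ext => w /=; tauto. Qed.

Lemma noise_rate_negb y b : noise_rate y (~~ b) = 1 - noise_rate y b.
Proof.
have /= qE := prb_split_bool P b (measurable_eq y mY) mYt.
rewrite /noise_rate -(divff (hY y)) -mulrBl {2}qE.
by congr (_ / _); ring.
Qed.

Lemma prb_noisy_label b : prb P [set w | Yt w = b] =
    noise_rate true b * prb P [set w | Y w = true]
  + noise_rate false b * prb P [set w | Y w = false].
Proof.
rewrite /noise_rate !mulfVK //.
rewrite (prb_split_bool P true (measurable_eq b mYt) mY) /=.
by congr (_ + _); apply: prb_ext => w /=; tauto.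
Qed.

Definition peer_alpha : R :=
  1 - (1 - e_neg P Y Yt - e_pos P Y Yt) * (delta_p P Y / delta_pt P Yt).

Lemma peer_alpha_mul_delta_pt : delta_pt P Yt != 0 ->
  peer_alpha * delta_pt P Yt = e_neg P Y Yt - e_pos P Y Yt.
Proof.
move=> hd; rewrite /peer_alpha mulrBl mul1r -mulrA mulfVK //.
have qF : prb P [set w | Y w = false] = 1 - prb P [set w | Y w = true].
  exact: (prb_negb P true mY).
have nF y : noise_rate y false = 1 - noise_rate y true.
  exact: (noise_rate_negb y true).
by rewrite /delta_pt /delta_p !prb_noisy_label e_posE e_negE !nF qF; ring.
Qed.

Section classifier.
Context {f : T -> bool} (mf : measurable_fun setT f).

Let mfX : measurable_fun setT (fun w => f (X w)) := measurableT_comp mf mX.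

Let err y := prb P [set w | Y w = y /\ f (X w) = ~~ y].

Lemma prb_joint_indep a y b :
    prb P [set w | (Y w = y /\ f (X w) = a) /\ Yt w = b]
  = prb P [set w | Y w = y /\ f (X w) = a] * noise_rate y b.
Proof.
have := hci _ y b (measurable_eq a mf).
rewrite (prb_ext P (A := [set w | X w \in _ /\ _ /\ _])
  (B := [set w | (Y w = y /\ f (X w) = a) /\ Yt w = b])); last first.
  by move=> w; rewrite /= in_setE /=; tauto.
rewrite (prb_ext P (A := [set w | X w \in _ /\ _])
  (B := [set w | Y w = y /\ f (X w) = a])); last first.
  by move=> w; rewrite /= in_setE /=; tauto.
by rewrite /noise_rate mulrA => <-; rewrite mulfK.
Qed.

Lemma prb_class_hit y : prb P [set w | Y w = y /\ f (X w) = y] =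
  prb P [set w | Y w = y] - err y.
Proof. by rewrite (prb_split_bool P y (measurable_eq y mY) mfX) addrK. Qed.

Lemma prb_mismatch_class y :
  prb P [set w | f (X w) != Yt w /\ Y w = y] =
    noise_rate y (~~ y) * prb P [set w | Y w = y]
  + (1 - 2 * noise_rate y (~~ y)) * err y.
Proof.
rewrite (prb_partition P
  (B := [set w | (Y w = y /\ f (X w) = y) /\ Yt w = ~~ y])
  (C := [set w | (Y w = y /\ f (X w) = ~~ y) /\ Yt w = y])).
- rewrite !prb_joint_indep prb_class_hit.
  by have := noise_rate_negb y (~~ y); rewrite negbK /err => ->; ring.
- by apply: measurableI; [apply: measurableI|]; exact: measurable_eq.
- by apply: measurableI; [apply: measurableI|]; exact: measurable_eq.
- move=> w /=; case: y (f (X w)) (Y w) (Yt w) => -[] [] [] /=;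
    intuition congruence.
- by move=> w /=; case: y (f (X w)) => -[] /=; intuition congruence.
Qed.

Lemma risk_classE : risk P X Y f = err true + err false.
Proof.
apply: prb_partition; try by apply: measurableI; exact: measurable_eq.
- by move=> w /=; case: (f (X w)) (Y w) => -[] /=; intuition congruence.
- by move=> w /= [->] _ [].
Qed.

Lemma prb_pred_true : prb P [set w | f (X w) = true] =
  prb P [set w | Y w = true] - err true + err false.
Proof.
rewrite -prb_class_hit (prb_split_bool P true (measurable_eq true mfX) mY) /=.
by congr (_ + _); apply: prb_ext => w /=; tauto.
Qed.

Lemma noisy_lossE : noisy_loss P X Yt f =
    (1 - e_neg P Y Yt - e_pos P Y Yt) * risk P X Y f + e_neg P Y Yt
  + (e_pos P Y Yt - e_neg P Y Yt) * prb P [set w | f (X w) = true].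
Proof.
have mneq : measurable [set w | f (X w) != Yt w] by exact: measurable_neq.
have qF : prb P [set w | Y w = false] = 1 - prb P [set w | Y w = true].
  exact: (prb_negb P true mY).
rewrite [LHS](prb_split_bool P true mneq mY) /= !prb_mismatch_class /=.
by rewrite risk_classE prb_pred_true e_posE e_negE qF /err; ring.
Qed.

Lemma peer_loss_affine : delta_pt P Yt != 0 ->
  peer_loss P X Yt peer_alpha f =
    (1 - e_neg P Y Yt - e_pos P Y Yt) * risk P X Y f
  + (e_neg P Y Yt - peer_alpha * prb P [set w | Yt w = true]).
Proof.
move=> hd; rewrite /peer_loss noisy_lossE (peer_termE P mX mYt _ mf).
have := peer_alpha_mul_delta_pt hd.
rewrite /delta_pt (prb_negb P true mYt) (prb_negb P true mfX) => hdelta.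
by rewrite -[e_pos P Y Yt - _]opprB -hdelta; ring.
Qed.

End classifier.

End class_conditional.

Theorem theorem4 (dO dX : measure_display) (Omega : measurableType dO)
  (T : measurableType dX) (R : realType) (P : probability Omega R)
  (X : Omega -> T) (Y Yt : Omega -> bool)
  (mX : measurable_fun setT X) (mY : measurable_fun setT Y)
  (mYt : measurable_fun setT Yt)
  (hp0 : 0 < p_pos P Y) (hp1 : p_pos P Y < 1)
  (hci : cond_indep P X Y Yt)
  (hnoise : e_neg P Y Yt + e_pos P Y Yt < 1)
  (hdelta : delta_pt P Yt != 0)
  (F : set (T -> bool)) (hF : forall f, F f -> measurable_fun setT f)
  (ft : T -> bool) (hft : F ft)
  (hmin : forall f, F f ->
     peer_loss P X Yt (1 - (1 - e_neg P Y Yt - e_pos P Y Yt)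
                           * (delta_p P Y / delta_pt P Yt)) ft
     <= peer_loss P X Yt (1 - (1 - e_neg P Y Yt - e_pos P Y Yt)
                           * (delta_p P Y / delta_pt P Yt)) f) :
  forall f, F f -> risk P X Y ft <= risk P X Y f.
Proof.
have hY y : prb P [set w | Y w = y] != 0.
  case: y; first exact: lt0r_neq0.
  by rewrite (prb_negb P true mY) subr_eq0 eq_sym lt_eqF.
have c_gt0 : 0 < 1 - e_neg P Y Yt - e_pos P Y Yt by lra.
have affine f (Ff : F f) :=
  peer_loss_affine P X Y Yt mX mY mYt hci hY (hF f Ff) hdelta.
move=> f Ff; have := hmin f Ff.
by rewrite !affine // lerD2r ler_pM2l.
Qed.
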